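(* Let $P=(\succ_1,\dots,\succ_n)$ and $P'=(\succ'_1,\dots,\succ'_n)$ be two preference profiles over the same set of agents $N$ and the same set of houses $H$. Then $G_P=G_{P'}$ (the two profiles induce the same majority graph) if and only if $P$ and $P'$ are rotation equivalent.
   Context: Let $n\ge 1$, let $N=\{1,\dots,n\}$ be a set of agents and $H$ a set of $n$ houses. A preference profile $P=(\succ_1,\dots,\succ_n)$ assigns to each agent $x\in N$ a strict linear order $\succ_x$ on $H$. An assignment is a bijection $\mu:N\to H$; $M$ denotes the set of all assignments. Agent $x$ weakly prefers $\mu$ to $\lambda$ if $\mu(x)\succ_x\lambda(x)$ or $\mu(x)=\lambda(x)$. Let $N_{\mu,\lambda}=\{x\in N: x \text{ weakly prefers } \mu \text{ to } \lambda\}$, and write $\mu\succsim\lambda$ if $|N_{\mu,\lambda}|\ge|N_{\lambda,\mu}|$. The majority graph of $P$ is the directed graph $G_P=(M,\{(\mu,\lambda)\in M^2:\mu\succsim\lambda\})$. An ordered partition $(H_1,\dots,H_k)$ of $H$ into nonempty sets is a decomposition of a profile $P$ if for all $1\le j<\ell\le k$, all $p\in H_j$, $q\in H_\ell$ and all $x\in N$ we have $p\succ_x q$. Two profiles $P,P'$ are rotation equivalent if there is a decomposition $(H_1,\dots,H_k)$ of $P$ such that (a) for every $j\le k$, all $p,q\in H_j$ and all $x\in N$: $p\succ_x q$ iff $p\succ'_x q$; and (b) there is $r\in\{0,\dots,k-1\}$ such that $(H_{1+r},\dots,H_{k+r})$ is a decomposition of $P'$, where indices are taken cyclically ($H_{j+r}:=H_{j+r-k}$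 if $j+r>k$). *)

From mathcomp Require Import all_boot.
Set Implicit Arguments. Unset Strict Implicit. Unset Printing Implicit Defensive.

(* Agents are 'I_n; houses form a finite type H with #|H| = n.
   A preference profile assigns to each agent x a relation P x on H,
   read "P x p q" as "p \succ_x q". *)
Definition profile (n : nat) (H : finType) := 'I_n -> rel H.

Definition strict_linear_order (H : finType) (r : rel H) : Prop :=
  (forall p, ~~ r p p) /\
  (forall p q s, r p q -> r q s -> r p s) /\
  (forall p q, p != q -> r p q || r q p).

Definition is_profile (n : nat) (H : finType) (P : profile n H) : Prop :=
  forall x, strict_linear_order (P x).

(* assignments: bijections N -> H (injective maps; #|H| = n makes them bijective) *)
Definition is_assignment (n : nat) (H : finType) (mu : {ffun 'I_n -> H}) : bool :=
  injectiveb mu.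

Definition weakly_prefers (n : nat) (H : finType) (P : profile n H) (x : 'I_n)
  (mu la : {ffun 'I_n -> H}) : bool :=
  P x (mu x) (la x) || (mu x == la x).

Definition N_set (n : nat) (H : finType) (P : profile n H)
  (mu la : {ffun 'I_n -> H}) : {set 'I_n} :=
  [set x | weakly_prefers P x mu la].

Definition maj_succsim (n : nat) (H : finType) (P : profile n H)
  (mu la : {ffun 'I_n -> H}) : bool :=
  #|N_set P la mu| <= #|N_set P mu la|.

Definition same_majority_graph (n : nat) (H : finType) (P P' : profile n H) : Prop :=
  forall mu la : {ffun 'I_n -> H}, is_assignment mu -> is_assignment la ->
    maj_succsim P mu la = maj_succsim P' mu la.

Definition ordered_partition (H : finType) (s : seq {set H}) : Prop :=
  (forall A, A \in s -> A != set0) /\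
  (forall p : H, count (fun A : {set H} => p \in A) s = 1).

Definition decomposition (n : nat) (H : finType) (P : profile n H)
  (s : seq {set H}) : Prop :=
  ordered_partition s /\
  (forall j l, j < l < size s ->
     forall p q, p \in nth set0 s j -> q \in nth set0 s l ->
     forall x, P x p q).

(* rotation equivalence; rot r s = (H_{1+r}, ..., H_{k+r}) cyclically *)
Definition rotation_equivalent (n : nat) (H : finType) (P P' : profile n H) : Prop :=
  exists s : seq {set H},
    decomposition P s /\
    (forall A, A \in s -> forall p q, p \in A -> q \in A ->
       forall x, P x p q = P' x p q) /\
    (exists2 r, r < size s & decomposition P' (rot r s)).

From mathcomp Require Import all_boot fingroup perm zify.
Set Implicit Arguments. Unset Strict Implicit. Unset Printing Implicit Defensive.

(* Two assignments that differ by a swap of the houses of two agents, or by a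
   cyclic shift of the houses of three agents, are compared by the majority
   graph according to how these few agents rank the houses involved.  Swaps
   show that P and P' can disagree on a pair {p, q} only if every agent ranks
   p above q in P and q above p in P' (a flip); three-cycles show that flips do
   not chain and split at every third house.  Hence the sources of flips form a
   set A that all agents rank on top in P, and P' is P with A moved to the
   bottom, which is rotation equivalence with A the union of the first r
   blocks.  Conversely, moving a top set A to the bottom changes whether agent
   x weakly prefers mu to la by [mu x \in A] - [la x \in A], and over a
   bijection both indicators sum to |A|. *)

Section StrictLinearOrder.
Variables (H : finType) (r : rel H).
Hypothesis slo : strict_linear_order r.

Lemma slo_irr p : r p p = false.
Proof. by case: slo => irr _; apply/negbTE/irr. Qed.

Lemma slo_trans p q s : r p q -> r q s -> r p s.
Proof. by case: slo => _ [tr _]; apply: tr. Qed.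

Lemma slo_asym p q : r p q -> r q p = false.
Proof. by move=> hpq; apply/negP => /(slo_trans hpq); rewrite slo_irr. Qed.

Lemma slo_neg p q : p != q -> r q p = ~~ r p q.
Proof.
move=> npq; case hpq: (r p q); first exact: slo_asym.
by case: slo => _ [_ /(_ p q npq)]; rewrite hpq.
Qed.

End StrictLinearOrder.

Definition top_set n (H : finType) (P : profile n H) (A : {set H}) :=
  forall x p q, p \in A -> q \notin A -> P x p q.

Definition demote n (H : finType) (P : profile n H) (A : {set H}) : profile n H :=
  fun x p q => if (p \in A) == (q \in A) then P x p q else q \in A.

Lemma decomposition_lt n (H : finType) (Q : profile n H) s x p q i j :
  is_profile Q -> decomposition Q s -> i < size s -> j < size s -> i != j ->
  p \in nth set0 s i -> q \in nth set0 s j -> Q x p q = (i < j).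
Proof.
move=> hQ [_ decQ] hi hj nij hp hq; case: ltngtP nij => // [lt | gt] _.
  by apply: decQ hp hq _; rewrite lt.
by apply: (slo_asym (hQ x)); apply: decQ hq hp _; rewrite gt.
Qed.

Lemma decomposition_top_set n (H : finType) (Q : profile n H) A :
  A != set0 -> ~: A != set0 -> top_set Q A -> decomposition Q [:: A; ~: A].
Proof.
move=> nA nAc topA; split; first split.
- by move=> B; rewrite !inE => /orP[] /eqP ->.
- by move=> p /=; rewrite inE; case: (p \in A).
move=> j l /= jl; have [-> ->] : j = 0 /\ l = 1 by lia.
by move=> p q hp; rewrite inE => hq x; apply: topA.
Qed.

Lemma decomposition_setT n (H : finType) (Q : profile n H) :
  0 < #|H| -> decomposition Q [:: setT].
Proof.
move=> /card_gt0P[h _]; split; first split.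
- by move=> B; rewrite inE => /eqP ->; apply/set0Pn; exists h; rewrite inE.
- by move=> p /=; rewrite inE.
by move=> j l /= jl; lia.
Qed.

Lemma demote_rotation_equivalent n (H : finType) (P P' : profile n H) A :
  0 < #|H| -> top_set P A -> (forall x, P' x =2 demote P A x) ->
  rotation_equivalent P P'.
Proof.
move=> H_gt0 topA hP'A.
have agree_same_side x p q : (p \in A) = (q \in A) -> P x p q = P' x p q.
  by move=> e; rewrite hP'A /demote e eqxx.
case: (boolP ((A != set0) && (~: A != set0))) => [/andP[nA nAc] | trivA].
  exists [:: A; ~: A]; split; first exact: decomposition_top_set.
  split.
    move=> B; rewrite !inE => /orP[] /eqP -> p q; rewrite ?inE => hp hq x;
      by apply: agree_same_side; move: hp hq; case: (p \in A); case: (q \in A).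
  exists 1 => //; rewrite /rot /= -[in X in [:: _; X]](setCK A).
  apply: decomposition_top_set; rewrite ?setCK // => x p q; rewrite !in_setC negbK => hp hq.
  by rewrite hP'A /demote (negbTE hp) hq.
have same_side p q : (p \in A) = (q \in A).
  case/nandP: trivA => /negPn/eqP A0; first by rewrite A0 !inE.
  by rewrite -[A]setCK A0 !inE.
exists [:: setT]; split; first exact: decomposition_setT.
split; first by move=> _ _ p q _ _ x; apply: agree_same_side.
by exists 0 => //; rewrite rot0; apply: decomposition_setT.
Qed.

Lemma nth_rot T (x0 : T) (s : seq T) r t : r <= size s -> t < size s ->
  nth x0 (rot r s) (if r <= t then t - r else t + (size s - r)) = nth x0 s t.
Proof.
move=> hr ht; rewrite /rot nth_cat size_drop; case: (leqP r t) => hrt.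
  have -> : t - r < size s - r by lia.
  by rewrite nth_drop subnKC.
have -> : (t + (size s - r) < size s - r) = false by lia.
by rewrite addnK nth_take.
Qed.

Definition block_index (H : finType) (s : seq {set H}) (p : H) :=
  find (fun B : {set H} => p \in B) s.

Lemma block_indexP (H : finType) (s : seq {set H}) p : ordered_partition s ->
  block_index s p < size s /\ p \in nth set0 s (block_index s p).
Proof.
case=> _ /(_ p) count1; have has_p : has (fun B : {set H} => p \in B) s.
  by rewrite has_count count1.
by split; [rewrite -has_find | exact: (nth_find set0 has_p)].
Qed.

Lemma rotation_equivalent_demote n (H : finType) (P P' : profile n H) :
  is_profile P -> is_profile P' -> rotation_equivalent P P' ->
  exists A, top_set P A /\ forall x, P' x =2 demote P A x.
Proof.
move=> hP hP' [s [decP [agree [r ltr decP']]]].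
pose i := block_index s; pose pos t := if r <= t then t - r else t + (size s - r).
have hin p : i p < size s /\ p \in nth set0 s (i p) := block_indexP p decP.1.
have hin' p : pos (i p) < size (rot r s) /\ p \in nth set0 (rot r s) (pos (i p)).
  have [ltp memp] := hin p; rewrite size_rot nth_rot ?(ltnW ltr) //.
  by split=> //; rewrite /pos; case: (leqP r (i p)); lia.
exists [set p | i p < r]; split.
  move=> x p q; rewrite !inE => hp hq; have [[ltp memp] [ltq memq]] := (hin p, hin q).
  by rewrite (decomposition_lt x hP decP ltp ltq _ memp memq); lia.
move=> x p q; rewrite /demote !inE; have [[ltp memp] [ltq memq]] := (hin p, hin q).
case: (eqVneq (i p) (i q)) => [e | ne].
  by rewrite e eqxx (agree _ (mem_nth set0 ltq) p q) // -e.
have [[ltp' memp'] [ltq' memq']] := (hin' p, hin' q).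
rewrite (decomposition_lt x hP decP ltp ltq ne memp memq).
rewrite (decomposition_lt x hP' decP' ltp' ltq' _ memp' memq') /pos.
  by case: (leqP r (i p)); case: (leqP r (i q)) => //= *; apply/idP/idP; lia.
by case: (leqP r (i p)); case: (leqP r (i q)); lia.
Qed.

Section MajorityCount.
Variables (n : nat) (H : finType) (Q : profile n H).

Lemma card_N_set (mu la : {ffun 'I_n -> H}) :
  #|N_set Q mu la| = \sum_i (weakly_prefers Q i mu la : nat).
Proof. by rewrite -sum1_card big_mkcond; apply: eq_bigr => i _; rewrite inE. Qed.

Lemma maj_succsim_moved (mu la : {ffun 'I_n -> H}) (s : seq 'I_n) :
  is_profile Q -> uniq s ->
  (forall i, i \in s -> mu i != la i) -> (forall i, i \notin s -> mu i = la i) ->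
  maj_succsim Q mu la = (size s <= (\sum_(i <- s) Q i (mu i) (la i)).*2).
Proof.
move=> hQ us moved fixed; rewrite /maj_succsim !card_N_set.
rewrite (bigID (mem s)) [X in _ <= X](bigID (mem s)) /= -!(big_uniq _ us).
have -> : \sum_(i | i \notin s) (weakly_prefers Q i la mu : nat) =
          \sum_(i | i \notin s) (weakly_prefers Q i mu la : nat).
  by apply: eq_bigr => i /fixed e; rewrite /weakly_prefers e eqxx !orbT.
rewrite leq_add2r !big_seq.
rewrite (eq_bigr (fun i => (~~ Q i (mu i) (la i) : nat))); last first.
  move=> i /moved ne; rewrite /weakly_prefers eq_sym (negbTE ne) orbF.
  by rewrite (slo_neg (hQ i) ne).
rewrite [X in _ <= X](eq_bigr (fun i => (Q i (mu i) (la i) : nat))); last first.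
  by move=> i /moved ne; rewrite /weakly_prefers (negbTE ne) orbF.
have total : \sum_(i <- s | i \in s) (~~ Q i (mu i) (la i) : nat) +
             \sum_(i <- s | i \in s) (Q i (mu i) (la i) : nat) = size s.
  by rewrite -big_split /= -big_seq -sum1_size; apply: eq_bigr => i _; rewrite addn_negb.
by rewrite -total -addnn leq_add2r.
Qed.

End MajorityCount.

Lemma sum_assigned_in n (H : finType) (m : {ffun 'I_n -> H}) (A : {set H}) :
  #|H| = n -> injective m -> \sum_i ((m i \in A) : nat) = #|A|.
Proof.
move=> cardH im; have bij_m : bijective m by apply: inj_card_bij; rewrite // card_ord cardH.
rewrite -sum1_card [RHS](reindex m) ?[RHS]big_mkcond; last exact: onW_bij.
by apply: eq_bigr => i _; case: (m i \in A).
Qed.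

Lemma demote_same_majority_graph n (H : finType) (P P' : profile n H) A :
  #|H| = n -> is_profile P -> top_set P A -> (forall x, P' x =2 demote P A x) ->
  same_majority_graph P P'.
Proof.
move=> cardH hP topA hP'A.
have card_N_set_demote (m l : {ffun 'I_n -> H}) : injective m -> injective l ->
    #|N_set P' m l| = #|N_set P m l|.
  move=> im il.
  have per_agent i : (weakly_prefers P' i m l : nat) + (m i \in A) =
                     weakly_prefers P i m l + (l i \in A).
    rewrite /weakly_prefers hP'A /demote.
    case: (eqVneq (m i) (l i)) => [-> | _]; first by rewrite !orbT.
    rewrite !orbF; case hm: (m i \in A); case hl: (l i \in A) => //=.
      by rewrite topA ?hm ?hl.
    by rewrite (slo_asym (hP i) (topA _ _ _ hl (negbT hm))).
  apply/eqP; rewrite !card_N_set -(eqn_add2r #|A|) -{1}(sum_assigned_in A cardH im).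
  by rewrite -(sum_assigned_in A cardH il) -!big_split; apply/eqP/eq_bigr => i _.
by move=> mu la /injectiveP imu /injectiveP ila; rewrite /maj_succsim !card_N_set_demote.
Qed.

Section Assignments.
Variables (n : nat) (H : finType).
Hypothesis cardH : #|H| = n.

Lemma exists_assignment : exists mu : {ffun 'I_n -> H}, injective mu.
Proof.
exists [ffun i => enum_val (cast_ord (esym cardH) i)].
by move=> i j; rewrite !ffunE => /enum_val_inj /cast_ord_inj.
Qed.

Lemma exists_assignment_on (s : seq ('I_n * H)) :
  uniq (unzip1 s) -> uniq (unzip2 s) ->
  exists2 mu : {ffun 'I_n -> H}, injective mu & forall xa, xa \in s -> mu xa.1 = xa.2.
Proof.
elim: s => [_ _ | [x a] s IH /= /andP[xs us] /andP[as_ ut]].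
  by have [mu imu] := exists_assignment; exists mu.
have [mu imu hmu] := IH us ut.
exists [ffun i => tperm a (mu x) (mu i)].
  by move=> i j; rewrite !ffunE => /perm_inj /imu.
move=> [y b]; rewrite inE => /orP[/eqP[-> ->] | yb]; first by rewrite ffunE tpermR.
have nxy : x != y by apply: contraNneq xs => ->; apply: (map_f fst yb).
have /= mub := hmu _ yb.
rewrite ffunE tpermD ?(inj_eq imu) // mub.
by apply: contraNneq as_ => ->; apply: (map_f snd yb).
Qed.

Lemma maj_succsim_swap (x y : 'I_n) (a b : H) : x != y -> a != b ->
  exists2 mu, is_assignment mu & exists2 la, is_assignment la &
    forall Q : profile n H, is_profile Q -> maj_succsim Q mu la = Q x a b || Q y b a.
Proof.
move=> nxy nab.
have := @exists_assignment_on [:: (x, a); (y, b)].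
rewrite /= !inE nxy nab => /(_ isT isT) [mu imu hmu].
have mx : mu x = a by apply: (hmu (x, a)); rewrite inE eqxx.
have my : mu y = b by apply: (hmu (y, b)); rewrite !inE eqxx orbT.
pose la := [ffun i => tperm a b (mu i)].
have ila : injective la by move=> i j; rewrite !ffunE => /perm_inj /imu.
exists mu; first exact/injectiveP.
exists la => [|Q hQ]; first exact/injectiveP.
rewrite (maj_succsim_moved (s := [:: x; y])) //.
- rewrite !big_cons big_nil !ffunE mx my tpermL tpermR addn0.
  by case: (Q x a b); case: (Q y b a).
- by rewrite /= inE nxy.
- move=> i; rewrite !inE => /orP[] /eqP ->; rewrite ffunE ?mx ?my ?tpermL ?tpermR //.
  by rewrite eq_sym.
- move=> i; rewrite !inE negb_or => /andP[nix niy].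
  by rewrite ffunE tpermD // -?mx -?my (inj_eq imu) eq_sym.
Qed.

Lemma maj_succsim_cycle3 (x y z : 'I_n) (a b c : H) :
  x != y -> x != z -> y != z -> a != b -> a != c -> b != c ->
  exists2 mu, is_assignment mu & exists2 la, is_assignment la &
    forall Q : profile n H, is_profile Q ->
      maj_succsim Q mu la = (2 <= Q x a b + Q y b c + Q z c a).
Proof.
move=> nxy nxz nyz nab nac nbc.
have := @exists_assignment_on [:: (x, a); (y, b); (z, c)].
rewrite /= !inE !negb_or nxy nxz nyz nab nac nbc => /(_ isT isT) [mu imu hmu].
have mx : mu x = a by apply: (hmu (x, a)); rewrite inE eqxx.
have my : mu y = b by apply: (hmu (y, b)); rewrite !inE eqxx orbT.
have mz : mu z = c by apply: (hmu (z, c)); rewrite !inE eqxx !orbT.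
pose la := [ffun i => tperm a c (tperm a b (mu i))].
have ila : injective la by move=> i j; rewrite !ffunE => /perm_inj /perm_inj /imu.
have lx : la x = b by rewrite ffunE mx tpermL tpermD // eq_sym.
have ly : la y = c by rewrite ffunE my tpermR tpermL.
have lz : la z = a by rewrite ffunE mz (tpermD nac nbc) tpermR.
exists mu; first exact/injectiveP.
exists la => [|Q hQ]; first exact/injectiveP.
rewrite (maj_succsim_moved (s := [:: x; y; z])) //.
- rewrite !big_cons big_nil mx my mz lx ly lz addn0 addnA.
  by rewrite /= -addnn; apply/idP/idP; lia.
- by rewrite /= !inE !negb_or nxy nxz nyz.
- by move=> i; rewrite !inE => /or3P[] /eqP ->; rewrite ?mx ?my ?mz ?lx ?ly ?lz // eq_sym.
- move=> i; rewrite !inE !negb_or => /and3P[nix niy niz].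
  have [na nb nc] : [/\ a != mu i, b != mu i & c != mu i].
    by split; rewrite -?mx -?my -?mz (inj_eq imu) eq_sym.
  by rewrite ffunE (tpermD na nb) (tpermD na nc).
Qed.

Lemma three_distinct_agents (a b c : H) : a != b -> a != c -> b != c ->
  exists x y z : 'I_n, [/\ x != y, x != z & y != z].
Proof.
move=> nab nac nbc.
have n_gt2 : 2 < n.
  rewrite -cardH cardE; apply: (@uniq_leq_size _ [:: a; b; c]) => [|t _].
    by rewrite /= !inE negb_or nab nac nbc.
  by rewrite mem_enum.
by exists (Ordinal (ltnW (ltnW n_gt2))), (Ordinal (ltnW n_gt2)), (Ordinal n_gt2).
Qed.

End Assignments.

Section Flips.
Variables (n : nat) (H : finType) (P P' : profile n H).
Hypotheses (n_gt0 : 0 < n) (cardH : #|H| = n).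
Hypotheses (hP : is_profile P) (hP' : is_profile P').
Hypothesis same_graph : same_majority_graph P P'.

Lemma swap_invariant x y a b : x != y -> a != b ->
  (P x a b || P y b a) = (P' x a b || P' y b a).
Proof.
move=> nxy nab; have [mu imu [la ila test]] := maj_succsim_swap cardH nxy nab.
by rewrite -!test ?same_graph.
Qed.

Lemma cycle3_invariant x y z a b c :
  x != y -> x != z -> y != z -> a != b -> a != c -> b != c ->
  (2 <= P x a b + P y b c + P z c a) = (2 <= P' x a b + P' y b c + P' z c a).
Proof.
move=> nxy nxz nyz nab nac nbc.
have [mu imu [la ila test]] := maj_succsim_cycle3 cardH nxy nxz nyz nab nac nbc.
by rewrite -!test ?same_graph.
Qed.

Definition flip p q := [forall x, P x p q && P' x q p].

Lemma flipP p q : reflect (forall x, P x p q /\ P' x q p) (flip p q).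
Proof. by apply: (iffP forallP) => h x; apply/andP; apply: h. Qed.

Lemma flip_neq p q : flip p q -> p != q.
Proof.
move=> /flipP /(_ (Ordinal n_gt0)) [hpq _].
by apply: contraTneq hpq => ->; rewrite slo_irr.
Qed.

Lemma disagree_flip x p q : P x p q -> P' x q p -> flip p q.
Proof.
move=> hx hx'; have npq : p != q by apply: contraTneq hx => ->; rewrite slo_irr.
apply/flipP => y; case: (eqVneq y x) => [-> // | nyx].
have nxy : x != y by rewrite eq_sym.
split; first by have := swap_invariant nyx npq; rewrite (slo_asym (hP x) hx) hx' !orbT orbF.
have := swap_invariant nxy npq.
by rewrite hx (slo_asym (hP' x) hx') => /= <-.
Qed.

Lemma agree_unflipped x p q : ~~ flip p q -> ~~ flip q p -> P' x p q = P x p q.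
Proof.
move=> npq nqp; case: (eqVneq p q) => [-> | ne]; first by rewrite !slo_irr.
case: (boolP (P x p q)) => hx.
  by apply: contraNT npq => h'; apply: disagree_flip hx _; rewrite (slo_neg (hP' x) ne).
apply/negbTE; apply: contra nqp; apply: disagree_flip.
by rewrite (slo_neg (hP x) ne).
Qed.

Lemma no_flip_chain a b c : flip a b -> flip b c -> False.
Proof.
move=> fab fbc; have nab := flip_neq fab; have nbc := flip_neq fbc.
move/flipP: fab => hab; move/flipP: fbc => hbc.
have nac : a != c.
  apply: contraTneq (hab (Ordinal n_gt0)).1 => ->.
  by rewrite (slo_asym (hP _) (hbc _).1).
have [x [y [z [nxy nxz nyz]]]] := three_distinct_agents cardH nab nac nbc.
have := cycle3_invariant nxy nxz nyz nab nac nbc.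
rewrite (hab x).1 (hbc y).1 (slo_asym (hP' x) (hab x).2) (slo_asym (hP' y) (hbc y).2).
by case: (P z c a); case: (P' z c a).
Qed.

Lemma flip_split a b c : flip a b -> c != a -> c != b -> flip a c || flip c b.
Proof.
move=> fab nca ncb; apply/negPn/negP => /norP[nfac nfcb].
have nfca : ~~ flip c a by apply/negP => fca; apply: no_flip_chain fca fab.
have nfbc : ~~ flip b c by apply/negP => fbc; apply: no_flip_chain fab fbc.
have nab := flip_neq fab; have nac : a != c by rewrite eq_sym.
have nbc : b != c by rewrite eq_sym.
move/flipP: fab => hab.
(* Between a and b, the house c would close a cycle a > c > b > a in P' y. *)
have c_extreme y : P y c a = ~~ P y b c.
  case hbc: (P y b c) => /=.
    by apply: (slo_asym (hP y)); apply: (slo_trans (hP y) (hab y).1).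
  apply: contraT; rewrite (slo_neg (hP y) nac) negbK => hac.
  have hcb : P y c b by rewrite (slo_neg (hP y) nbc) hbc.
  have := slo_trans (hP' y) (_ : P' y a c) (_ : P' y c b).
  by rewrite (slo_asym (hP' y) (hab y).2) !agree_unflipped // => /(_ hac hcb).
(* Otherwise the three-cycle test tells P from P', which differ only on {a, b}. *)
have opposite x y z : x != y -> x != z -> y != z -> P y b c = ~~ P z b c.
  move=> nxy nxz nyz; have := cycle3_invariant nxy nxz nyz nab nac nbc.
  rewrite (hab x).1 (slo_asym (hP' x) (hab x).2) !agree_unflipped // c_extreme.
  by case: (P y b c); case: (P z b c).
have [u [v [w [nuv nuw nvw]]]] := three_distinct_agents cardH nab nac nbc.
have [nvu nwu nwv] : [/\ v != u, w != u & w != v] by split; rewrite eq_sym.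
have := opposite u v w nuv nuw nvw; have := opposite v w u nvw nvu nwu.
have := opposite w u v nwu nwv nuv.
by case: (P u b c); case: (P v b c); case: (P w b c).
Qed.

Definition flip_sources := [set p | [exists q, flip p q]].

Lemma flip_cut p q : flip p q = (p \in flip_sources) && (q \notin flip_sources).
Proof.
apply/idP/andP => [fpq | []]; rewrite !inE.
  split; first by apply/existsP; exists q.
  by apply/existsP => -[r fqr]; apply: no_flip_chain fpq fqr.
move=> /existsP[b fpb] nq; case: (eqVneq q b) => [-> // | nqb].
have nqp : q != p by apply: contraNneq nq => ->; apply/existsP; exists b.
case/orP: (flip_split fpb nqp nqb) => // fqb.
by case/negP: nq; apply/existsP; exists b.
Qed.

Lemma top_set_flip_sources : top_set P flip_sources.
Proof. by move=> x p q hp hq; have /flipP/(_ x)[] : flip p q by rewrite flip_cut hp hq. Qed.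

Lemma demote_flip_sources x : P' x =2 demote P flip_sources x.
Proof.
move=> p q; rewrite /demote.
case hp: (p \in flip_sources); case hq: (q \in flip_sources) => /=.
- by rewrite agree_unflipped // !flip_cut hp hq.
- by have /flipP/(_ x)[_ /(slo_asym (hP' x))->] : flip p q by rewrite flip_cut hp hq.
- by have /flipP/(_ x)[] : flip q p by rewrite flip_cut hp hq.
- by rewrite agree_unflipped // !flip_cut hp hq.
Qed.

End Flips.

Theorem theorem3p1 (n : nat) (H : finType) (P P' : profile n H) :
  0 < n -> #|H| = n -> is_profile P -> is_profile P' ->
  (same_majority_graph P P' <-> rotation_equivalent P P').
Proof.
move=> n_gt0 cardH hP hP'; split=> [same_graph | ].
  apply: (demote_rotation_equivalent (A := flip_sources P P')); first by rewrite cardH.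
    exact: top_set_flip_sources n_gt0 cardH hP hP' same_graph.
  exact: demote_flip_sources n_gt0 cardH hP hP' same_graph.
move=> /(rotation_equivalent_demote hP hP') [A [topA hP'A]].
exact: demote_same_majority_graph cardH hP topA hP'A.
Qed.
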